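(* Let $L\in\mathbb{R}^{m\times m}$ satisfy $\|\mathrm{e}^{\omega L}\|_\infty\le 1$ for all $\omega>0$. Let $\rho>0$ and let $f:[-\rho,\rho]\to\mathbb{R}$ (acting componentwise on vectors) satisfy (F+) there exists $\omega_0^+>0$ such that $|\xi+\omega f(\xi)|\le\rho$ for all $\xi\in[-\rho,\rho]$ and all $\omega\in(0,\omega_0^+]$; (F$-$) there exists $\omega_0^->0$ such that $|\xi-\omega f(\xi)|\le\rho$ for all $\xi\in[-\rho,\rho]$ and all $\omega\in(0,\omega_0^-]$. Consider the $s$-stage IFRK step $$u^{(0)}=u^n,\qquad u^{(i)}=\sum_{j=0}^{i-1}\mathrm{e}^{(c_i-c_j)\tau L}\big[\alpha_{ij}u^{(j)}+\tau\beta_{ij}f(u^{(j)})\big],\ 1\le i\le s,\qquad u^{n+1}=u^{(s)},$$ where the coefficients satisfy $\alpha_{ij}\ge 0$, $\sum_{j=0}^{i-1}\alpha_{ij}=1$ for each $i$, $\beta_{ij}=0$ whenever $\alpha_{ij}=0$, and the abscissas are non-decreasing: $c_0\le c_1\le\cdots\le c_s$. Suppose $\|u^n\|_\infty\le\rho$. If all $\beta_{ij}\ge 0$ and $$\tau\le \mathcal{C}\,\omega_0^+,\qquad \mathcal{C}=\min_{(i,j):\,\beta_{ij}>0}\frac{\alpha_{ij}}{\beta_{ij}},$$ or if some $\beta_{ij}<0$ and $$\tau\le \mathcal{C}\,\min\{\omega_0^+,\omega_0^-\},\qquad \mathcal{C}=\min_{(i,j):\,\beta_{ij}\neq 0}\frac{\alpha_{ij}}{|\beta_{ij}|},$$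 then $\|u^{(i)}\|_\infty\le\rho$ for all $i$, and in particular $\|u^{n+1}\|_\infty\le\rho$.
   Context: $\|\cdot\|_\infty$ denotes the vector $\infty$-norm on $\mathbb{R}^m$ and the induced matrix norm. For $u\in\mathbb{R}^m$, $f(u)$ denotes the vector with components $f(u_j)$. $\tau>0$ is the time step size. This step discretizes the ODE system $\frac{du}{dt}=Lu+f(u)$. *)

From HB Require Import structures.
From mathcomp Require Import all_boot all_order all_algebra.
From mathcomp Require Import all_classical all_reals all_analysis.
Set Implicit Arguments. Unset Strict Implicit. Unset Printing Implicit Defensive.
Import Order.TTheory GRing.Theory Num.Theory.
Local Open Scope ring_scope.

Section Defs.
Variable R : realType.

Definition mxpow (m : nat) (A : 'M[R]_m) (k : nat) : 'M[R]_m :=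
  iter k (mulmx A) 1%:M.

Definition expm (m : nat) (A : 'M[R]_m) : 'M[R]_m :=
  \matrix_(i, j) limn (fun n => \sum_(k < n) (mxpow A k) i j / (k`!)%:R).

Definition vnorm_inf (m : nat) (v : 'cV[R]_m) : R :=
  \big[Num.max/0]_(i < m) `|v i 0|.

Definition mnorm_inf (m : nat) (A : 'M[R]_m) : R :=
  sup [set vnorm_inf (A *m v) | v in [set v : 'cV[R]_m | vnorm_inf v <= 1]].

Definition fvec (f : R -> R) (m : nat) (v : 'cV[R]_m) : 'cV[R]_m := map_mx f v.

(* C = min over (i,j), 1<=i<=s, 0<=j<i, with P (beta i j), of alpha_ij/|beta_ij|
   (in the extended reals; the empty minimum is +oo) *)
Definition Cconst (s : nat) (alpha beta : nat -> nat -> R) (P : R -> bool) : \bar R :=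
  \big[Order.min/+oo%E]_(i < s.+1)
     \big[Order.min/+oo%E]_(j < i | P (beta i j)) ((alpha i j / `|beta i j|)%:E).

Definition IFRK_stages (m s : nat) (L : 'M[R]_m) (f : R -> R) (tau : R)
  (alpha beta : nat -> nat -> R) (c : nat -> R) (un : 'cV[R]_m)
  (u : nat -> 'cV[R]_m) : Prop :=
  u 0%N = un /\
  forall i, (1 <= i <= s)%N ->
    u i = \sum_(j < i)
            expm (((c i - c j) * tau) *: L) *m
              (alpha i j *: u j + (tau * beta i j) *: fvec f (u j)).
End Defs.

From HB Require Import structures.
From mathcomp Require Import all_boot all_order all_algebra.
From mathcomp Require Import all_classical all_reals all_analysis.
Import Order.TTheory GRing.Theory Num.Theory.
Import numFieldNormedType.Exports.
Local Open Scope ring_scope.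
Set Implicit Arguments. Unset Strict Implicit.

(* Writing the bracket as
   alpha_ij (u^(j) + w_ij f(u^(j))) with w_ij = tau beta_ij / alpha_ij, it is
   alpha_ij times a forward (w_ij > 0) or backward (w_ij < 0) Euler step, which
   stays in [-rho, rho] componentwise by (F+)/(F-) as soon as |w_ij| is below
   w0+ resp. w0-; the step-size restriction through the constant C gives exactly
   that.  The exponentials have non-negative time arguments because the c_i are
   non-decreasing, hence are contractions, and the alpha_ij sum to 1, so by the
   triangle inequality every stage lies in the ball again (strong induction). *)

Section Norms.
Variables (R : realType) (m : nat).
Implicit Types (v : 'cV[R]_m) (A : 'M[R]_m).

Lemma vnorm_le v (r : R) : 0 <= r -> (forall i, `|v i 0| <= r) -> vnorm_inf v <= r.
Proof. by move=> r0 hv; apply: bigmax_le. Qed.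

Lemma vnorm_ge v i : `|v i 0| <= vnorm_inf v.
Proof. exact: le_bigmax. Qed.

Lemma vnorm_ge0 v : 0 <= vnorm_inf v.
Proof. exact: bigmax_ge_id. Qed.

Lemma vnorm_eq0 v : vnorm_inf v = 0 -> v = 0.
Proof.
move=> v0; apply/matrixP => i j; rewrite ord1 mxE.
by apply/eqP; rewrite -normr_le0 -v0 vnorm_ge.
Qed.

Lemma vnorm_sum n (F : 'I_n -> 'cV[R]_m) :
  vnorm_inf (\sum_(j < n) F j) <= \sum_(j < n) vnorm_inf (F j).
Proof.
apply: vnorm_le => [|i]; first by apply: sumr_ge0 => j _; exact: vnorm_ge0.
rewrite summxE; apply: le_trans (ler_norm_sum _ _ _) _.
by apply: ler_sum => j _; exact: vnorm_ge.
Qed.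

(* The induced norm dominates the image of any vector of the unit ball;
   the set defining it is bounded by the sum of the absolute entries. *)
Lemma mnorm_ub A v : vnorm_inf v <= 1 -> vnorm_inf (A *m v) <= mnorm_inf A.
Proof.
move=> hv; apply: ub_le_sup; last by exists v.
exists (\sum_i \sum_j `|A i j|) => _ [w /= hw <-].
apply: vnorm_le => [|i]; first by apply: sumr_ge0 => i _; apply: sumr_ge0.
rewrite mxE; apply: le_trans (ler_norm_sum _ _ _) _.
apply: (@le_trans _ _ (\sum_j `|A i j|)).
  apply: ler_sum => j _; rewrite normrM -[X in _ <= X]mulr1 ler_wpM2l //.
  exact: le_trans (vnorm_ge w j) hw.
rewrite [X in _ <= X](bigD1 i) //= lerDl.
by apply: sumr_ge0 => k _; apply: sumr_ge0.
Qed.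

Lemma mnorm_contraction A v : mnorm_inf A <= 1 -> vnorm_inf (A *m v) <= vnorm_inf v.
Proof.
move=> hA; have [v0|vn0] := eqVneq (vnorm_inf v) 0.
  by rewrite v0 (vnorm_eq0 v0) mulmx0; apply: vnorm_le => // i; rewrite mxE normr0.
have vpos : 0 < vnorm_inf v by rewrite lt_def vn0 vnorm_ge0.
set r := vnorm_inf v in vpos *.
have hunit : vnorm_inf (r^-1 *: v) <= 1.
  apply: vnorm_le => // i; rewrite mxE normrM ger0_norm ?invr_ge0 ?(ltW vpos) //.
  by rewrite ler_pdivrMl // mulr1 vnorm_ge.
have hAv := le_trans (mnorm_ub A hunit) hA.
rewrite -[v](scalerKV (lt0r_neq0 vpos)) -scalemxAr.
apply: vnorm_le => [|i]; first exact: ltW.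
rewrite mxE normrM (ger0_norm (ltW vpos)) -[X in _ <= X]mulr1 ler_wpM2l ?(ltW vpos) //.
exact: le_trans (vnorm_ge _ i) hAv.
Qed.

Lemma contraction_sum_bound n (E : 'I_n -> 'M[R]_m) (y : 'I_n -> 'cV[R]_m)
    (a : 'I_n -> R) (r : R) :
  (forall j, mnorm_inf (E j) <= 1) -> (forall j, vnorm_inf (y j) <= a j * r) ->
  \sum_(j < n) a j = 1 -> vnorm_inf (\sum_(j < n) E j *m y j) <= r.
Proof.
move=> hE hy asum; apply: le_trans (vnorm_sum _) _.
rewrite -[X in _ <= X]mul1r -asum mulr_suml; apply: ler_sum => j _.
exact: le_trans (mnorm_contraction _ (hE j)) (hy j).
Qed.

Lemma expm0 (L : 'M[R]_m) : expm (0 *: L) = 1%:M.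
Proof.
apply/matrixP => i j; rewrite mxE.
apply: (@cvg_lim R^o); first exact: norm_hausdorff.
apply: cvg_near_cst; exists 1%N => // -[//|n] _.
rewrite big_ord_recl big1 ?addr0; first by rewrite /mxpow /= divr1.
by move=> k _; rewrite /mxpow /= scale0r mul0mx mxE mul0r.
Qed.

Lemma mnorm1 : mnorm_inf (1%:M : 'M[R]_m) <= 1.
Proof.
apply: ge_sup; last by move=> _ [v /= hv <-]; rewrite mul1mx.
exists (vnorm_inf ((1%:M : 'M[R]_m) *m 0)), 0 => //=.
by apply: vnorm_le => // i; rewrite mxE normr0.
Qed.

Lemma expm_contraction (L : 'M[R]_m) (w : R) :
  (forall w : R, 0 < w -> mnorm_inf (expm (w *: L)) <= 1) ->
  0 <= w -> mnorm_inf (expm (w *: L)) <= 1.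
Proof.
move=> hL; rewrite le_eqVlt => /orP[/eqP <-|]; last exact: hL.
by rewrite expm0 mnorm1.
Qed.

End Norms.

Section EulerStep.
Variables (R : realType) (rho : R) (f : R -> R) (w0p w0m : R).
Hypothesis Fplus :
  forall xi w : R, -rho <= xi <= rho -> 0 < w <= w0p -> `|xi + w * f xi| <= rho.
Hypothesis Fminus :
  forall xi w : R, -rho <= xi <= rho -> 0 < w <= w0m -> `|xi - w * f xi| <= rho.

Definition euler_admissible (w : R) : Prop :=
  (0 < w -> w <= w0p) /\ (w < 0 -> - w <= w0m).

Lemma euler_step_bounded (xi w : R) :
  `|xi| <= rho -> euler_admissible w -> `|xi + w * f xi| <= rho.
Proof.
move=> hxi [hpos hneg]; have hxi' : -rho <= xi <= rho by rewrite -ler_norml.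
have [wneg|wpos|->] := ltgtP w 0.
- rewrite -[w]opprK mulNr; apply: Fminus => //.
  by rewrite oppr_gt0 wneg hneg.
- by apply: Fplus => //; rewrite wpos hpos.
- by rewrite mul0r addr0.
Qed.

(* A stage term alpha xi + tau beta f(xi) is alpha times an Euler step of
   size tau beta / alpha; a vanishing alpha forces a vanishing beta. *)
Lemma stage_term_bounded (a b tau xi : R) :
  0 <= a -> (a = 0 -> b = 0) -> (0 < a -> euler_admissible (tau * b / a)) ->
  `|xi| <= rho -> `|a * xi + tau * b * f xi| <= a * rho.
Proof.
move=> a0 ab0 hadm hxi; have [az|anz] := eqVneq a 0.
  by rewrite az (ab0 az) mulr0 !mul0r addr0 normr0.
have apos : 0 < a by rewrite lt_def anz a0.
have -> : a * xi + tau * b * f xi = a * (xi + tau * b / a * f xi).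
  by rewrite mulrDr mulrA [a * (_ / _)]mulrC divfK.
by rewrite normrM ger0_norm // ler_wpM2l // euler_step_bounded //; exact: hadm.
Qed.

Lemma stage_vector_bounded m (a b tau : R) (x : 'cV[R]_m) :
  0 <= rho -> 0 <= a -> (a = 0 -> b = 0) ->
  (0 < a -> euler_admissible (tau * b / a)) -> vnorm_inf x <= rho ->
  vnorm_inf (a *: x + (tau * b) *: fvec f x) <= a * rho.
Proof.
move=> rho0 a0 ab0 hadm hx.
apply: vnorm_le => [|k]; first exact: mulr_ge0.
rewrite !mxE; apply: stage_term_bounded => //.
exact: le_trans (vnorm_ge x k) hx.
Qed.

End EulerStep.

Section StepSize.
Variables (R : realType) (s : nat) (alpha beta : nat -> nat -> R).

Lemma Cconst_le (P : R -> bool) i j :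
  (i <= s)%N -> (j < i)%N -> P (beta i j) ->
  (Cconst s alpha beta P <= (alpha i j / `|beta i j|)%:E)%E.
Proof.
move=> hi hj hP; rewrite /Cconst.
apply: le_trans; first exact: (bigmin_le _ (Ordinal (hi : (i < s.+1)%N))).
exact: (@bigmin_le_cond _ _ _ _ (Ordinal hj) _ _ hP).
Qed.

Lemma step_ratio_le (P : R -> bool) (tau W : R) i j :
  (i <= s)%N -> (j < i)%N -> P (beta i j) -> 0 < alpha i j -> 0 <= W ->
  (tau%:E <= Cconst s alpha beta P * W%:E)%E ->
  tau * `|beta i j| / alpha i j <= W.
Proof.
move=> hi hj hP apos W0 htau.
have := le_trans htau (lee_wpmul2r (W0 : (0 <= W%:E)%E) (Cconst_le hi hj hP)).
rewrite -EFinM lee_fin => hle.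
have [->|bn0] := eqVneq (beta i j) 0; first by rewrite normr0 mulr0 mul0r.
have bpos : 0 < `|beta i j| by rewrite normr_gt0.
rewrite ler_pdivrMr //; apply: le_trans (ler_wpM2r (ltW bpos) hle) _.
by rewrite mulrAC divfK ?gt_eqF // mulrC.
Qed.

Lemma stage_ratio_admissible (w0p w0m tau : R) i j :
  0 < w0p -> 0 < w0m -> 0 < tau -> (1 <= i <= s)%N -> (j < i)%N -> 0 < alpha i j ->
  ((forall i j, (1 <= i <= s)%N -> (j < i)%N -> 0 <= beta i j) /\
     (tau%:E <= Cconst s alpha beta (fun b : R => (0 < b)%R) * w0p%:E)%E
   \/
   (exists i j, [/\ (1 <= i <= s)%N, (j < i)%N & beta i j < 0]) /\
     (tau%:E <= Cconst s alpha beta (fun b : R => (b != 0)%R)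
                  * (Num.min w0p w0m)%:E)%E) ->
  euler_admissible w0p w0m (tau * beta i j / alpha i j).
Proof.
move=> wp0 wm0 tau0 hi1 hj apos Hcase; have /andP[_ hi] := hi1.
have Wmin0 : 0 <= Num.min w0p w0m by rewrite le_min !ltW.
have [bneg|bpos|->] := ltgtP (beta i j) 0; last first.
- by split=> //; rewrite mulr0 mul0r ltxx.
- have ratio : tau * beta i j / alpha i j <= w0p.
    rewrite -(gtr0_norm bpos); case: Hcase => [[_ htau]|[_ htau]].
      exact: (step_ratio_le hi hj _ apos (ltW wp0) htau).
    apply: le_trans (step_ratio_le hi hj _ apos Wmin0 htau) _.
      by rewrite /= gt_eqF.
    by rewrite ge_min lexx.
  split=> // wneg; suff : 0 < tau * beta i j / alpha i j by rewrite ltNge (ltW wneg).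
  by rewrite divr_gt0 ?mulr_gt0.
- have ratio : - (tau * beta i j / alpha i j) <= w0m.
    rewrite -mulNr -mulrN -(ltr0_norm bneg); case: Hcase => [[hb _]|[_ htau]].
      by have := hb i j hi1 hj; rewrite leNgt bneg.
    apply: le_trans (step_ratio_le hi hj _ apos Wmin0 htau) _.
      by rewrite /= lt_eqF.
    by rewrite ge_min lexx orbT.
  split=> // wpos; suff : tau * beta i j / alpha i j < 0 by rewrite ltNge (ltW wpos).
  by rewrite pmulr_llt0 ?invr_gt0 // pmulr_rlt0.
Qed.

End StepSize.

Lemma nondecreasing_prefix (R : numDomainType) (c : nat -> R) (s : nat) :
  (forall i, (i < s)%N -> c i <= c i.+1) ->
  forall j i, (j <= i)%N -> (i <= s)%N -> c j <= c i.
Proof.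
move=> cinc j; elim=> [|i IH]; first by rewrite leqn0 => /eqP ->.
rewrite leq_eqVlt => /orP[/eqP -> //|hji] his.
exact: le_trans (IH hji (ltnW his)) (cinc _ his).
Qed.

Unset Implicit Arguments. Set Strict Implicit.
Theorem theorem3p1 (R : realType) (m s : nat) (L : 'M[R]_m)
  (rho : R) (f : R -> R) (w0p w0m tau : R)
  (alpha beta : nat -> nat -> R) (c : nat -> R)
  (un : 'cV[R]_m) (u : nat -> 'cV[R]_m) :
  (forall w : R, 0 < w -> mnorm_inf (expm (w *: L)) <= 1) ->
  0 < rho ->
  0 < w0p ->
  (forall xi w : R, -rho <= xi <= rho -> 0 < w <= w0p -> `|xi + w * f xi| <= rho) ->
  0 < w0m ->
  (forall xi w : R, -rho <= xi <= rho -> 0 < w <= w0m -> `|xi - w * f xi| <= rho) ->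
  0 < tau ->
  (forall i j, (1 <= i <= s)%N -> (j < i)%N -> 0 <= alpha i j) ->
  (forall i, (1 <= i <= s)%N -> \sum_(j < i) alpha i j = 1) ->
  (forall i j, (1 <= i <= s)%N -> (j < i)%N -> alpha i j = 0 -> beta i j = 0) ->
  (forall i, (i < s)%N -> c i <= c i.+1) ->
  @IFRK_stages R m s L f tau alpha beta c un u ->
  vnorm_inf un <= rho ->
  ((forall i j, (1 <= i <= s)%N -> (j < i)%N -> 0 <= beta i j) /\
     (tau%:E <= Cconst s alpha beta (fun b : R => (0 < b)%R) * w0p%:E)%E
   \/
   (exists i j, [/\ (1 <= i <= s)%N, (j < i)%N & beta i j < 0]) /\
     (tau%:E <= Cconst s alpha beta (fun b : R => (b != 0)%R) * (Num.min w0p w0m)%:E)%E) ->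
  forall i, (i <= s)%N -> vnorm_inf (u i) <= rho.
Proof.
move=> hL rho0 wp0 Fplus wm0 Fminus tau0 a0 asum ab0 cinc [u0 ustep] hun Hcase.
elim/ltn_ind=> -[|i] IH his; first by rewrite u0.
have hi : (1 <= i.+1 <= s)%N by rewrite his.
rewrite (ustep _ hi); apply: contraction_sum_bound (asum _ hi) => j.
- (* e^{(c_i - c_j) tau L} is a contraction since c_j <= c_i *)
  apply: expm_contraction hL _; rewrite mulr_ge0 ?(ltW tau0) // subr_ge0.
  exact: nondecreasing_prefix cinc _ _ (ltnW (ltn_ord j)) his.
- (* each bracket is alpha_ij times an admissible Euler step of u^(j) *)
  have hj : (j < i.+1)%N := ltn_ord j.
  apply: (stage_vector_bounded Fplus Fminus) (ltW rho0) (a0 _ _ hi hj) (ab0 _ _ hi hj) _ _.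
  + by move=> apos; exact: stage_ratio_admissible wp0 wm0 tau0 hi hj apos Hcase.
  + exact: IH _ hj (leq_trans (ltnW hj) his).
Qed.
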